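(* Let $T=(V,E)$ be a finite rooted tree (an elimination tree), let $\Pr$ be a probability distribution over a finite set of queries, and let $R\subseteq V$. Let $u,v\in R$ be such that $v\in A(u)$ (i.e., $v$ is a proper ancestor of $u$) and $\mathrm{path}(u,v)\cap R=\emptyset$. Then $$\mathbb{E}[I(u,R)]=\mathbb{E}[I(u,v)],$$ where the expectation is over the query distribution.
   Context: $T=(V,E)$ is a finite rooted tree. For $u\in V$, $T(u)$ denotes the set of nodes of the subtree rooted at $u$ (including $u$), $A(u)$ the set of proper ancestors of $u$ (the nodes on the path from $u$ to the root, excluding $u$), and for $v\in A(u)$, $\mathrm{path}(u,v)$ the set of nodes strictly between $u$ and $v$ on that path. Each non-leaf node of $T$ is associated with a variable from a finite set $X$; $\mathrm{vars}(u)\subseteq X$ denotes the set of variables associated with the nodes of $T(u)$. Each query $q$ determines a set $Z_q\subseteq X$ (its summed-out variables). For $R\subseteq V$, $u\in V$ and a query $q$, define $I_q(u,R)=1$ if (i) $u\in R$, (ii) $\mathrm{vars}(u)\subseteq Z_q$, and (iii) there is no $w\in A(u)$ with $w\in R$ and $\mathrm{vars}(w)\subseteq Z_q$; otherwise $I_q(u,R)=0$. Set $\mathbb{E}[I(u,R)]=\sum_q \Pr(q)\,I_q(u,R)$. For $v\in A(u)$ write $\mathbb{E}[I(u,v)]:=\mathbb{E}[I(u,\{u,v\})]$. *)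

From mathcomp Require Import all_boot all_order all_algebra.
Set Implicit Arguments. Unset Strict Implicit. Unset Printing Implicit Defensive.
Import Order.TTheory GRing.Theory Num.Theory.

Section Tree.
Variables (V X : finType) (par : V -> option V) (lab : V -> option X).

Definition parent_rel : rel V := fun x y => par x == Some y.

(* w \in A(u): w is a proper ancestor of u *)
Definition ancb (u w : V) : bool :=
  [exists z, (par u == Some z) && connect parent_rel z w].

Definition rooted_tree : Prop :=
  (exists r : V, forall x, (par x == None) = (x == r)) /\
  (forall x, ~~ ancb x x).

Definition nonleaf_labelled : Prop :=
  forall x, (lab x != None) = [exists y, par y == Some x].

Definition subtree (u : V) : {set V} := [set x | (x == u) || ancb x u].

Definition vars (u : V) : {set X} :=
  [set a | [exists w in subtree u, lab w == Some a]].

Definition Iq (Zq : {set X}) (u : V) (R : {set V}) : bool :=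
  [&& u \in R, vars u \subset Zq &
      ~~ [exists w, [&& ancb u w, w \in R & vars w \subset Zq]]].

Definition EI (K : numDomainType) (Q : finType) (Pr : Q -> K) (Z : Q -> {set X})
    (u : V) (R : {set V}) : K :=
  (\sum_(q : Q) Pr q * (Iq (Z q) u R)%:R)%R.

End Tree.

(* The proper ancestors of u form a chain, and vars grows along it.  Since v
   is the nearest proper ancestor of u in R, every proper ancestor w of u in R
   is v or lies above v, so vars v \subset vars w.  Hence, for every query,
   condition (iii) of I_q(u, R) and of I_q(u, {u, v}) both say exactly that
   vars v is not contained in Z_q, and the two indicators agree pointwise.
   So only acyclicity is needed: neither the labelling hypothesis nor the
   fact that Pr is a probability distribution plays a role. *)
From mathcomp Require Import all_boot all_order all_algebra.
Import GRing.Theory Num.Theory.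
Set Implicit Arguments.
Unset Strict Implicit.

Section Ancestors.
Variables (V : finType) (par : V -> option V).
Local Notation e := (parent_rel par).
Local Notation ancb := (ancb par).

Lemma parent_rel_functional x y y' : e x y -> e x y' -> y = y'.
Proof. by rewrite /parent_rel => /eqP -> /eqP []. Qed.

Lemma connect_parentP x y :
  reflect (x = y \/ exists2 z, e x z & connect e z y) (connect e x y).
Proof.
apply: (iffP connectP) => [[[|z p] /= pxy ->]|[->|[z exz /connectP[p pzy ->]]]].
- by left.
- by case/andP: pxy => exz pzy; right; exists z => //; apply/connectP; exists p.
- by exists [::].
- by exists (z :: p) => //=; rewrite exz.
Qed.

Lemma ancbP u w : reflect (exists2 z, par u = Some z & connect e z w) (ancb u w).
Proof.
apply: (iffP existsP) => [[z /andP[/eqP uz zw]]|[z uz zw]]; exists z => //.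
by rewrite uz eqxx.
Qed.

Lemma ancb_connect x y : ancb x y -> connect e x y.
Proof.
by case/ancbP=> z xz zy; apply: connect_trans zy; apply: connect1; rewrite /e xz.
Qed.

Lemma ancb_connect_trans x y w : ancb x y -> connect e y w -> ancb x w.
Proof.
by case/ancbP=> z xz zy yw; apply/ancbP; exists z => //; apply: connect_trans yw.
Qed.

Lemma ancb_trans x y w : ancb x y -> ancb y w -> ancb x w.
Proof. by move=> xy /ancb_connect; apply: ancb_connect_trans. Qed.

Lemma connect_ancb x y : connect e x y -> x != y -> ancb x y.
Proof.
case/connect_parentP=> [->|[z /eqP xz zy]]; first by rewrite eqxx.
by move=> _; apply/ancbP; exists z.
Qed.

Lemma connect_parent_total z w v :
  connect e z w -> connect e z v -> connect e w v || connect e v w.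
Proof.
move=> /connectP[p]; elim: p z => [|y p IHp] z /=; first by move=> _ -> ->.
case/andP=> ezy pyw wE /connect_parentP[<-|[y' ezy' y'v]].
  by apply/orP; right; apply/connectP; exists (y :: p) => //=; rewrite ezy.
by rewrite -(parent_rel_functional ezy ezy') in y'v; apply: IHp pyw wE y'v.
Qed.

Lemma ancb_total u w v :
  ancb u w -> ancb u v -> [|| w == v, ancb w v | ancb v w].
Proof.
case/ancbP=> z uz zw /ancbP[z' uz' z'v].
have z'z : z' = z by move: uz'; rewrite uz => -[].
rewrite {}z'z in z'v.
have [// | wv /=] := eqVneq w v.
case/orP: (connect_parent_total zw z'v) => [/connect_ancb-> //|vw].
by rewrite (connect_ancb vw) ?orbT // eq_sym.
Qed.

Variables (X : finType) (lab : V -> option X).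
Local Notation vars := (vars par lab).

Lemma subtree_ancb v w : ancb v w -> subtree par v \subset subtree par w.
Proof.
move=> vw; apply/subsetP => x; rewrite !inE => /orP[/eqP->|xv].
  by rewrite vw orbT.
by rewrite (ancb_trans xv vw) orbT.
Qed.

Lemma vars_ancb v w : ancb v w -> vars v \subset vars w.
Proof.
move/subtree_ancb/subsetP=> sub; apply/subsetP => a; rewrite !inE.
by case/existsP=> x /andP[xv xa]; apply/existsP; exists x; rewrite sub.
Qed.

Section NearestAncestor.
Variables (R : {set V}) (u v : V) (Zq : {set X}).
Hypotheses (u_acyclic : ~~ ancb u u) (uv : ancb u v).

Lemma covered_ancestor_pairE :
  [exists w, [&& ancb u w, w \in [set u; v] & vars w \subset Zq]]
  = (vars v \subset Zq).
Proof.
apply/existsP/idP => [[w /and3P[uw]]|vZ]; last by exists v; rewrite uv !inE eqxx orbT.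
rewrite !inE => /orP[/eqP wu|/eqP-> //].
by move: u_acyclic; rewrite -{2}wu uw.
Qed.

Hypotheses (vR : v \in R) (v_nearest : forall w, ancb u w -> ancb w v -> w \notin R).

Lemma covered_ancestorE :
  [exists w, [&& ancb u w, w \in R & vars w \subset Zq]] = (vars v \subset Zq).
Proof.
apply/existsP/idP => [[w /and3P[uw wR wZ]]|vZ]; last by exists v; rewrite uv vR.
case/or3P: (ancb_total uw uv) => [/eqP<- // | wv | vw].
  by rewrite (negPf (v_nearest uw wv)) in wR.
exact: subset_trans (vars_ancb vw) wZ.
Qed.

Lemma Iq_nearest_ancestor :
  u \in R -> Iq par lab Zq u R = Iq par lab Zq u [set u; v].
Proof.
by move=> uR; rewrite /Iq covered_ancestorE covered_ancestor_pairE !inE eqxx uR.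
Qed.

End NearestAncestor.
End Ancestors.

Theorem lemma1 (K : realFieldType) (V X Q : finType)
    (par : V -> option V) (lab : V -> option X)
    (Pr : Q -> K) (Z : Q -> {set X}) (R : {set V}) (u v : V) :
  rooted_tree par ->
  nonleaf_labelled par lab ->
  (forall q, (0 <= Pr q)%R) ->
  (\sum_(q : Q) Pr q)%R = 1%R ->
  u \in R -> v \in R ->
  ancb par u v ->
  (forall w, ancb par u w -> ancb par w v -> w \notin R) ->
  EI par lab Pr Z u R = EI par lab Pr Z u [set u; v].
Proof.
move=> [_ acyclic] _ _ _ uR vR uv v_nearest.
apply: eq_bigr => q _.
by rewrite (Iq_nearest_ancestor lab (Z q) (acyclic u) uv vR v_nearest uR).
Qed.
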